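(* Let $S$ be a ramified inverse semigroup with zero. Let $A=\{a_1,\dots,a_n\}^{\downarrow}$, where $\{a_1,\dots,a_n\}$ is a finite set of pairwise compatible elements of $S$. Then $A=\{b_1,\dots,b_m\}^{\downarrow}$ for some finite set $\{b_1,\dots,b_m\}$ of pairwise orthogonal elements.
   Context: The natural partial order is used; $X^{\downarrow}=\{s\in S : s\le x \text{ for some } x\in X\}$. Elements $s,t$ are compatible if $s^{-1}t$ and $st^{-1}$ are idempotents, orthogonal if $s^{-1}t=0=st^{-1}$. $S$ is ramified if for all $a,b,c\in S$ with $a\ne0$, $a\le b$ and $a\le c$ imply $b\le c$ or $c\le b$. *)

From Stdlib Require Import List.
Import ListNotations.

Record InvSemigroup0 := {
  carrier :> Type;
  mul : carrier -> carrier -> carrier;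
  inv : carrier -> carrier;
  zero : carrier;
  mul_assoc : forall a b c, mul a (mul b c) = mul (mul a b) c;
  zero_mull : forall a, mul zero a = zero;
  zero_mulr : forall a, mul a zero = zero;
  inv_regular1 : forall s, mul (mul s (inv s)) s = s;
  inv_regular2 : forall s, mul (mul (inv s) s) (inv s) = inv s;
  inv_unique : forall s t, mul (mul s t) s = s -> mul (mul t s) t = t -> t = inv s
}.

Arguments mul {S} : rename.
Arguments inv {S} : rename.
Arguments zero {S} : rename.

Definition idempotent {S : InvSemigroup0} (e : S) : Prop := mul e e = e.

Definition nleq {S : InvSemigroup0} (s t : S) : Prop := s = mul (mul t (inv s)) s.

Definition compatible {S : InvSemigroup0} (s t : S) : Prop :=
  idempotent (mul (inv s) t) /\ idempotent (mul s (inv t)).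

Definition orthogonal {S : InvSemigroup0} (s t : S) : Prop :=
  mul (inv s) t = zero /\ mul s (inv t) = zero.

Definition downset {S : InvSemigroup0} (X : list S) (s : S) : Prop :=
  exists x, In x X /\ nleq s x.

Definition ramified (S : InvSemigroup0) : Prop :=
  forall a b c : S, a <> zero -> nleq a b -> nleq a c -> nleq b c \/ nleq c b.

(* Two compatible elements [x], [y] of an inverse semigroup have the common
   lower bounds [x x^-1 y] and [x y^-1 y]; in a ramified semigroup a nonzero
   common lower bound forces [x] and [y] to be comparable, and the vanishing
   of both bounds is exactly orthogonality.  Hence the maximal elements of a
   finite set of pairwise compatible elements are pairwise orthogonal, and
   they generate the same order ideal. *)
From Stdlib Require Import List Classical.

Section InverseSemigroup.
Variable S : InvSemigroup0.
Implicit Types s t u e f x y z : S.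

Ltac reassoc T := transitivity T; [rewrite ?mul_assoc; reflexivity|].

Lemma inv_involutive s : inv (inv s) = s.
Proof. symmetry; apply inv_unique; [apply inv_regular2 | apply inv_regular1]. Qed.

Lemma idempotent_inv e : idempotent e -> inv e = e.
Proof. intro He; unfold idempotent in He; symmetry; apply inv_unique; rewrite !He; auto. Qed.

Lemma idempotent_invl s : idempotent (mul (inv s) s).
Proof. unfold idempotent; rewrite mul_assoc, inv_regular2; auto. Qed.

Lemma idempotent_invr s : idempotent (mul s (inv s)).
Proof. unfold idempotent; rewrite mul_assoc, inv_regular1; auto. Qed.

(* [x := (e f)^-1] is checked to equal [f x e] by uniqueness of inverses,
   whence [x] is idempotent, hence its own inverse. *)
Lemma idempotent_mul e f : idempotent e -> idempotent f -> idempotent (mul e f).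
Proof.
  unfold idempotent; intros He Hf.
  set (x := inv (mul e f)).
  assert (Hx : mul (mul f x) e = x).
  { apply inv_unique.
    - reassoc (mul (mul (mul e (mul f f)) x) (mul (mul e e) f)).
      rewrite He, Hf; apply inv_regular1.
    - reassoc (mul (mul f (mul (mul x (mul (mul e e) (mul f f))) x)) e).
      rewrite He, Hf; unfold x; rewrite inv_regular2; reflexivity. }
  assert (Hxx : mul x x = x).
  { rewrite <- Hx at 1 2.
    reassoc (mul (mul f (mul (mul x (mul e f)) x)) e).
    unfold x; rewrite inv_regular2; exact Hx. }
  assert (Hxef : x = mul e f).
  { rewrite <- (idempotent_inv x Hxx); apply inv_involutive. }
  rewrite <- Hxef; exact Hxx.
Qed.

Lemma idempotent_comm e f : idempotent e -> idempotent f -> mul e f = mul f e.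
Proof.
  intros He Hf.
  pose proof (idempotent_mul e f He Hf) as Hef.
  pose proof (idempotent_mul f e Hf He) as Hfe.
  unfold idempotent in *.
  rewrite <- (idempotent_inv (mul e f) Hef).
  symmetry; apply inv_unique.
  - reassoc (mul (mul e (mul f f)) (mul (mul e e) f)); rewrite He, Hf; exact Hef.
  - reassoc (mul (mul f (mul e e)) (mul (mul f f) e)); rewrite He, Hf; exact Hfe.
Qed.

Lemma inv_mul s t : inv (mul s t) = mul (inv t) (inv s).
Proof.
  symmetry; apply inv_unique.
  - reassoc (mul (mul s (mul (mul t (inv t)) (mul (inv s) s))) t).
    rewrite (idempotent_comm _ _ (idempotent_invr t) (idempotent_invl s)).
    reassoc (mul (mul (mul s (inv s)) s) (mul (mul t (inv t)) t)).
    rewrite !inv_regular1; reflexivity.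
  - reassoc (mul (mul (inv t) (mul (mul (inv s) s) (mul t (inv t)))) (inv s)).
    rewrite (idempotent_comm _ _ (idempotent_invl s) (idempotent_invr t)).
    reassoc (mul (mul (mul (inv t) t) (inv t)) (mul (mul (inv s) s) (inv s))).
    rewrite !inv_regular2; reflexivity.
Qed.

Lemma nleq_iff_mul_idempotent s t :
  nleq s t <-> exists e, idempotent e /\ s = mul t e.
Proof.
  unfold nleq; split.
  - intro Hs; exists (mul (inv s) s); split; [apply idempotent_invl|].
    rewrite <- mul_assoc in Hs; exact Hs.
  - intros [e [He ->]].
    rewrite inv_mul, (idempotent_inv e He); symmetry.
    reassoc (mul (mul t (mul e (mul (inv t) t))) e).
    rewrite (idempotent_comm _ _ He (idempotent_invl t)).
    reassoc (mul (mul (mul t (inv t)) t) (mul e e)).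
    unfold idempotent in He; rewrite inv_regular1, He; reflexivity.
Qed.

Lemma nleq_refl s : nleq s s.
Proof. unfold nleq; symmetry; apply inv_regular1. Qed.

Lemma nleq_trans s t u : nleq s t -> nleq t u -> nleq s u.
Proof.
  rewrite !nleq_iff_mul_idempotent; intros [e [He ->]] [f [Hf ->]].
  exists (mul f e); split; [apply idempotent_mul; auto | apply eq_sym, mul_assoc].
Qed.

Lemma nleq_antisym s t : nleq s t -> nleq t s -> s = t.
Proof.
  rewrite !nleq_iff_mul_idempotent; intros [e [He Hs]] [f [Hf Ht]].
  assert (Hsfe : s = mul s (mul f e)) by (rewrite mul_assoc, <- Ht; exact Hs).
  assert (Hsf : mul s f = s).
  { rewrite Hsfe at 1.
    reassoc (mul s (mul f (mul e f))); rewrite (idempotent_comm e f He Hf).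
    unfold idempotent in Hf; reassoc (mul s (mul (mul f f) e)); rewrite Hf; auto. }
  rewrite Ht, Hsf; reflexivity.
Qed.

Lemma mul_idempotent_nleq s e : idempotent e -> nleq (mul s e) s.
Proof. intro He; apply nleq_iff_mul_idempotent; exists e; auto. Qed.

(* [f s = s (s^-1 f s)], and [s^-1 f s] is idempotent. *)
Lemma idempotent_mul_nleq f s : idempotent f -> nleq (mul f s) s.
Proof.
  intro Hf; apply nleq_iff_mul_idempotent; exists (mul (mul (inv s) f) s); split.
  - unfold idempotent.
    reassoc (mul (mul (inv s) (mul f (mul s (inv s)))) (mul f s)).
    rewrite (idempotent_comm _ _ Hf (idempotent_invr s)).
    reassoc (mul (mul (mul (inv s) s) (inv s)) (mul (mul f f) s)).
    unfold idempotent in Hf; rewrite inv_regular2, Hf; apply mul_assoc.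
  - symmetry; reassoc (mul (mul (mul s (inv s)) f) s).
    rewrite <- (idempotent_comm _ _ Hf (idempotent_invr s)).
    reassoc (mul f (mul (mul s (inv s)) s)); rewrite inv_regular1; reflexivity.
Qed.

Lemma ramified_lower_bound_zero x y z : ramified S ->
  ~ nleq x y -> ~ nleq y x -> nleq z x -> nleq z y -> z = zero.
Proof.
  intros HS Nxy Nyx Hzx Hzy; apply NNPP; intro Hz.
  destruct (HS z x y Hz Hzx Hzy); contradiction.
Qed.

Lemma compatible_incomparable_orthogonal x y : ramified S ->
  compatible x y -> ~ nleq x y -> ~ nleq y x -> orthogonal x y.
Proof.
  intros HS [Hxy Hyx] Nxy Nyx.
  assert (Hl : mul (mul x (inv x)) y = zero).
  { apply (ramified_lower_bound_zero x y); auto.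
    - rewrite <- mul_assoc; apply mul_idempotent_nleq; exact Hxy.
    - apply idempotent_mul_nleq, idempotent_invr. }
  assert (Hr : mul (mul x (inv y)) y = zero).
  { apply (ramified_lower_bound_zero x y); auto.
    - rewrite <- mul_assoc; apply mul_idempotent_nleq, idempotent_invl.
    - apply idempotent_mul_nleq; exact Hyx. }
  split.
  - rewrite <- (inv_regular2 _ x).
    reassoc (mul (inv x) (mul (mul x (inv x)) y)); rewrite Hl; apply zero_mulr.
  - rewrite <- (inv_regular2 _ y).
    reassoc (mul (mul (mul x (inv y)) y) (inv y)); rewrite Hr; apply zero_mull.
Qed.

End InverseSemigroup.

Section MaximalElements.
Variables (T : Type) (R : T -> T -> Prop).
Hypothesis R_refl : forall x, R x x.
Hypothesis R_trans : forall x y z, R x y -> R y z -> R x z.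
Hypothesis R_antisym : forall x y, R x y -> R y x -> x = y.

Definition maximal_in (L : list T) (m : T) : Prop :=
  In m L /\ forall y, In y L -> R m y -> y = m.

Lemma maximal_in_cons_keep a L m :
  maximal_in L m -> (R m a -> a = m) -> maximal_in (a :: L) m.
Proof.
  intros [Hm Hmax] Hma; split; [right; exact Hm|].
  intros y [<- | Hy] Hmy; auto.
Qed.

Lemma maximal_in_cons_new a L m :
  maximal_in L m -> R m a -> maximal_in (a :: L) a.
Proof.
  intros [Hm Hmax] Hma; split; [left; reflexivity|].
  intros y [<- | Hy] Hay; [reflexivity|].
  assert (y = m) as -> by (apply Hmax; eauto).
  apply R_antisym; assumption.
Qed.

Lemma exists_maximal_above (L : list T) x :
  In x L -> exists m, maximal_in L m /\ R x m.
Proof.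
  revert x; induction L as [|a L IH]; intros x Hx; [destruct Hx|].
  destruct Hx as [<- | Hx].
  - destruct (classic (exists y, In y L /\ R a y)) as [[y [Hy Hay]] | Hnone].
    + destruct (IH y Hy) as [m [Hm Hym]].
      exists m; split; [|eauto].
      apply maximal_in_cons_keep; eauto.
    + exists a; split; [|apply R_refl].
      split; [left; reflexivity|].
      intros y [<- | Hy] Hay; [reflexivity | exfalso; eauto].
  - destruct (IH x Hx) as [m [Hm Hxm]].
    destruct (classic (R m a)) as [Hma | Nma].
    + exists a; split; [eapply maximal_in_cons_new; eauto | eauto].
    + exists m; split; [apply maximal_in_cons_keep; tauto | exact Hxm].
Qed.

End MaximalElements.

Lemma exists_sublist (T : Type) (P : T -> Prop) (L : list T) :
  exists L', forall x, In x L' <-> In x L /\ P x.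
Proof.
  induction L as [|a L [L' IH]]; [exists nil; simpl; tauto|].
  destruct (classic (P a)) as [Ha | Na].
  - exists (a :: L'); intro x; simpl; rewrite IH.
    split; [intros [<- | ?] | intros [[<- | ?] ?]]; tauto.
  - exists L'; intro x; simpl; rewrite IH.
    split; [tauto | intros [[<- | ?] ?]; tauto].
Qed.

Theorem lemma3p8 (S : InvSemigroup0) (HS : ramified S) (As : list S)
  (Hcomp : forall x y, In x As -> In y As -> x <> y -> compatible x y) :
  exists Bs : list S,
    (forall x y, In x Bs -> In y Bs -> x <> y -> orthogonal x y) /\
    (forall s, downset As s <-> downset Bs s).
Proof.
  destruct (exists_sublist _ (maximal_in _ nleq As) As) as [Bs HBs].
  exists Bs; split.
  - intros x y Hx Hy Hxy.
    apply HBs in Hx as [Hx [_ Hxmax]]; apply HBs in Hy as [Hy [_ Hymax]].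
    apply compatible_incomparable_orthogonal; [exact HS | auto | |].
    + intro Hle; apply Hxy, eq_sym, Hxmax; auto.
    + intro Hle; apply Hxy, Hymax; auto.
  - intro s; split.
    + intros [x [Hx Hsx]].
      destruct (exists_maximal_above _ nleq (nleq_refl S) (nleq_trans S)
                  (nleq_antisym S) As x Hx) as [m [Hm Hxm]].
      exists m; split; [apply HBs; split; [apply Hm | exact Hm]|].
      apply nleq_trans with x; assumption.
    + intros [x [Hx Hsx]]; exists x; split; [apply HBs in Hx; tauto | exact Hsx].
Qed.
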